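(* Let $G=(V,E)$ be a finite connected undirected graph and let $M \subseteq V$ be the set of marked vertices, where the subgraph of $G$ induced by $M$ is connected. Suppose that the subgraph of $G$ induced by $V \setminus M$ is disconnected. Then the quantum walk search on $G$ with marked set $M$ (as described in the context) has a stationary state.
   Context: Quantum walk search model: the Hilbert space has orthonormal basis $\{|u,v\rangle : \{u,v\}\in E\}$ (one basis vector per arc, i.e. per ordered pair of adjacent vertices). For a vertex $u$ with neighbourhood $N(u)$, let $|s_u\rangle = \frac{1}{\sqrt{\deg_G(u)}}\sum_{v\in N(u)}|u,v\rangle$ and $G_u = 2|s_u\rangle\langle s_u| - I$ (Grover diffusion) acting on $\mathrm{span}\{|u,v\rangle : v\in N(u)\}$. The coin $C$ acts as $G_u$ on the arcs leaving each unmarked vertex $u\notin M$ and as $-G_u$ on the arcs leaving each marked vertex $u\in M$; the flip-flop shift is $S|u,v\rangle = |v,u\rangle$; one step of the walk is $U = SC$. A stationary state is a nonzero vector $|\psi\rangle$ with $U|\psi\rangle = |\psi\rangle$. *)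

From HB Require Import structures.
From mathcomp Require Import all_boot all_order all_algebra all_field.
Set Implicit Arguments. Unset Strict Implicit. Unset Printing Implicit Defensive.
Import Order.TTheory GRing.Theory Num.Theory.
Local Open Scope ring_scope.

(* A finite simple graph is a symmetric irreflexive relation e on a finType V. *)
Section QuantumWalk.
Variables (V : finType) (e : rel V).

(* Arcs: ordered pairs (u,v) of adjacent vertices; basis of the Hilbert space. *)
Definition arc : finType := {p : V * V | e p.1 p.2}.

Definition deg (u : V) : nat := #|[set v | e u v]|.

(* Grover diffusion G_u = 2|s_u><s_u| - I on arcs leaving u, with
   |s_u> = deg(u)^{-1/2} sum_{v in N(u)} |u,v>; hence
   (G_u psi)(u,v) = 2/deg(u) * sum_{w in N(u)} psi(u,w) - psi(u,v). *)
Definition coin (M : {set V}) (psi : {ffun arc -> algC}) : {ffun arc -> algC} :=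
  [ffun a : arc =>
     let u := (val a).1 in
     (if u \in M then -1 else 1) *
       (2 / (deg u)%:R * (\sum_(b : arc | (val b).1 == u) psi b) - psi a)].

(* Flip-flop shift S|u,v> = |v,u>, i.e. (S phi)(u,v) = phi(v,u).
   (The [None] branch never occurs for a symmetric e.) *)
Definition shift (phi : {ffun arc -> algC}) : {ffun arc -> algC} :=
  [ffun a : arc =>
     match (insub ((val a).2, (val a).1) : option arc) return algC with
     | Some b => phi b
     | None => 0
     end].

Definition walk (M : {set V}) (psi : {ffun arc -> algC}) : {ffun arc -> algC} :=
  shift (coin M psi).

Definition has_stationary_state (M : {set V}) : Prop :=
  exists psi : {ffun arc -> algC}, psi != 0 /\ walk M psi = psi.

Definition induced (A : {set V}) : rel V :=
  fun x y => [&& e x y, x \in A & y \in A].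

Definition induced_connected (A : {set V}) : Prop :=
  forall x y, x \in A -> y \in A -> connect (induced A) x y.

End QuantumWalk.

From Pilot Require Import Defs.
From HB Require Import structures.
From mathcomp Require Import all_boot all_order all_algebra all_field.
From mathcomp Require Import ring.
Set Implicit Arguments. Unset Strict Implicit. Unset Printing Implicit Defensive.
Import Order.TTheory GRing.Theory Num.Theory.
Local Open Scope ring_scope.

(* A vector psi on arcs is fixed by the walk as soon as it is symmetric,
   psi(v, .) is constant at every unmarked v, and psi(v, .) sums to zero at
   every marked v.  Such a psi is obtained from a function alpha that is
   constant on the components of the unmarked subgraph, by putting alpha(u)
   on the arcs at an unmarked u and a symmetric weighting G on the edges
   inside M; G must cancel, at each marked v, the contribution of the
   unmarked neighbours of v.  Adding +1 and -1 alternately along paths in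
   the connected set M shows that every such demand b can be met by some G
   as soon as one linear condition sum_u s(u) b(u) = 0 holds, where the sign
   s(u) is the parity of some path in M from a fixed marked vertex to u.  With two unmarked components, alpha = a chi_1 + b chi_2 leaves
   a nontrivial choice of (a, b) satisfying that condition. *)

Lemma exists_nontrivial_comb0 (F : fieldType) (p q : F) :
  exists a b, ((a != 0) || (b != 0)) /\ a * p + b * q = 0.
Proof.
have [-> | p0] := eqVneq p 0; first by exists 1, 0; rewrite oner_eq0 mulr0 mul0r addr0.
by exists q, (- p); rewrite oppr_eq0 p0 orbT mulNr mulrC subrr.
Qed.

Section InducedGraph.
Variables (V : finType) (e : rel V).
Hypothesis e_sym : symmetric e.

Lemma induced_sym (A : {set V}) : symmetric (induced e A).
Proof. by move=> x y; rewrite /induced e_sym (andbC (x \in A)). Qed.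

Lemma connect_induced_edge (A : {set V}) z u w :
  e u w -> u \in A -> w \in A ->
  connect (induced e A) z u = connect (induced e A) z w.
Proof.
move=> euw uA wA; apply: same_connect_r; first exact/sym_connect_sym/induced_sym.
by apply: connect1; rewrite /induced euw uA wA.
Qed.

Lemma exists_neighbour (v m : V) :
  connect e v m -> v != m -> exists w, e v w.
Proof.
case/connectP=> [[|w p]] /=; first by move=> _ ->; rewrite eqxx.
by case/andP=> evw _ _ _; exists w.
Qed.

Lemma induced_connected_setT :
  (forall x y, connect e x y) -> induced_connected e [set: V].
Proof.
move=> conn x y _ _; rewrite (@eq_connect _ _ e) // => u w.
by rewrite /induced !inE !andbT.
Qed.

Lemma not_induced_connected (A : {set V}) : ~ induced_connected e A ->
  exists x y, [/\ x \in A, y \in A & ~~ connect (induced e A) x y].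
Proof.
move=> Adisconn.
have [[x y] /and3P[xA yA nxy] | none] :=
  pickP [pred p : V * V | [&& p.1 \in A, p.2 \in A & ~~ connect (induced e A) p.1 p.2]].
  by exists x, y.
by case: Adisconn => x y xA yA; have /= := none (x, y); rewrite xA yA => /negbFE.
Qed.

End InducedGraph.

Section ArcFunctions.
Variables (V : finType) (e : rel V).
Hypothesis e_sym : symmetric e.

Definition arcfun (F : V -> V -> algC) : {ffun Defs.arc e -> algC} :=
  [ffun a : Defs.arc e => F (val a).1 (val a).2].

Lemma arcfun_eq0 F : arcfun F = 0 -> forall u w, e u w -> F u w = 0.
Proof.
move=> F0 u w euw.
by have := congr1 (fun f : {ffun Defs.arc e -> algC} => f (Sub (u, w) euw)) F0; rewrite !ffunE.
Qed.

Lemma sum_arcs_from (F : V -> V -> algC) v :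
  \sum_(a : Defs.arc e | (val a).1 == v) F (val a).1 (val a).2 =
  \sum_(w | e v w) F v w.
Proof.
transitivity (\sum_(u | u == v) \sum_(w | e u w) F u w); last exact: big_pred1_eq.
rewrite pair_big_dep /=.
rewrite (reindex_omap (val : Defs.arc e -> V * V) insub) => [|[u w] /andP[_ euw]];
  last by rewrite /= insubT.
by apply: eq_bigl => -[[u w] euw] /=; rewrite insubT /= euw andbT eqxx andbT.
Qed.

Variable M : {set V}.

Lemma walk_arcfun_fixed (F : V -> V -> algC) :
  (forall u v, e u v -> F u v = F v u) ->
  (forall v u w, v \notin M -> e v u -> e v w -> F v u = F v w) ->
  (forall v, v \in M -> \sum_(w | e v w) F v w = 0) ->
  walk M (arcfun F) = arcfun F.
Proof.
move=> Fsym Fconst Fbal; apply/ffunP => -[[u v] /= euv].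
have evu : e v u by rewrite e_sym.
rewrite /walk /shift !ffunE /= (insubT (fun p : V * V => e p.1 p.2) (x := (v, u)) evu).
rewrite /coin ffunE /=; under eq_bigr do rewrite ffunE.
rewrite sum_arcs_from ffunE /= (Fsym _ _ euv).
have [vM | vU] := boolP (v \in M); first by rewrite Fbal // mulr0 sub0r mulN1r opprK.
have -> : \sum_(w | e v w) F v w = (deg e v)%:R * F v u.
  rewrite (eq_bigr (fun=> F v u)) => [|w evw]; last exact: Fconst.
  by rewrite sumr_const /deg cardsE mulr_natl.
have deg0 : (deg e v)%:R != 0 :> algC.
  by rewrite pnatr_eq0 -lt0n; apply/card_gt0P; exists u; rewrite inE.
by rewrite mul1r mulrA divfK //; ring.
Qed.

End ArcFunctions.

Section EdgeWeights.
Variables (V : finType) (e : rel V) (M : {set V}).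
Hypothesis e_sym : symmetric e.

Definition wdeg (G : V -> V -> algC) v := \sum_(w | e v w && (w \in M)) G v w.

Lemma wdeg_sum (I : finType) (A : {pred I}) (c : I -> algC)
    (G : I -> V -> V -> algC) v :
  wdeg (fun x y => \sum_(i in A) c i * G i x y) v = \sum_(i in A) c i * wdeg (G i) v.
Proof. by rewrite /wdeg exchange_big; apply: eq_bigr => i _; rewrite mulr_sumr. Qed.

Definition edge_weight (x y : V) v w : algC :=
  ((v == x) && (w == y))%:R + ((v == y) && (w == x))%:R.

Lemma sum_pred1_nat (P : pred V) y : \sum_(w | P w) (w == y)%:R = (P y)%:R :> algC.
Proof.
rewrite big_mkcond (bigD1 y) //= eqxx big1 => [|w /negbTE ->]; last by case: ifP.
by rewrite addr0; case: (P y).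
Qed.

Lemma wdeg_edge_weight x y v : induced e M x y ->
  wdeg (edge_weight x y) v = (v == x)%:R + (v == y)%:R.
Proof.
case/and3P=> exy xM yM.
have pick z t : e z t -> t \in M ->
    \sum_(w | e v w && (w \in M)) ((v == z) && (w == t))%:R = (v == z)%:R :> algC.
  move=> ezt tM; have [->|vz] := eqVneq v z; last by rewrite big1 // => w _; rewrite (negbTE vz).
  by rewrite sum_pred1_nat ezt tM.
by rewrite /wdeg /edge_weight big_split /= pick // pick // e_sym.
Qed.

Lemma wdegDZ G H c v :
  wdeg (fun x y => G x y + c * H x y) v = wdeg G v + c * wdeg H v.
Proof. by rewrite /wdeg big_split mulr_sumr. Qed.

Lemma dipole_weights m0 u : connect (induced e M) m0 u ->
  exists s : algC, s ^+ 2 = 1 /\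
  exists2 G : V -> V -> algC, (forall v w, G v w = G w v) &
    forall v, wdeg G v = (v == m0)%:R - s * (v == u)%:R.
Proof.
case/connectP=> p + ->; elim/last_ind: p => [_ | p y IH] /=.
  exists 1; split; first exact: expr1n.
  by exists (fun _ _ => 0) => // v; rewrite /wdeg big1 // mul1r subrr.
rewrite rcons_path last_rcons => /andP[/IH[s [s2 [G Gsym GH]]] xy].
set x := last m0 p in xy *; exists (- s); split; first by rewrite sqrrN.
exists (fun v w => G v w + s * edge_weight x y v w) => [v w | v].
  by rewrite Gsym /edge_weight !(andbC (v == _)) [X in _ + _ * X = _]addrC.
by rewrite wdegDZ GH wdeg_edge_weight //; ring.
Qed.

Lemma wdeg_onto_hyperplane m0 : m0 \in M -> induced_connected e M ->
  exists s : V -> algC, forall b : V -> algC, \sum_(u in M) s u * b u = 0 ->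
  exists2 G : V -> V -> algC, (forall v w, G v w = G w v) &
    {in M, forall v, wdeg G v + b v = 0}.
Proof.
move=> m0M Mconn.
have dipole u : exists sG : algC * (V -> V -> algC), u \in M ->
    [/\ sG.1 ^+ 2 = 1, forall v w, sG.2 v w = sG.2 w v &
        forall v, wdeg sG.2 v = (v == m0)%:R - sG.1 * (v == u)%:R].
  have [uM | _] := boolP (u \in M); last by exists (0, fun _ _ => 0).
  by have [s [s2 [G Gsym GH]]] := dipole_weights (Mconn _ _ m0M uM); exists (s, G).
have [sG sGH] := fin_all_exists dipole.
exists (fun u => (sG u).1) => b sb0.
exists (fun v w => \sum_(u in M) ((sG u).1 * b u) * (sG u).2 v w) => [v w | v vM].
  by apply: eq_bigr => u uM; have [_ -> _] := sGH u uM.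
rewrite wdeg_sum.
transitivity (\sum_(u in M) ((v == m0)%:R * ((sG u).1 * b u) - (v == u)%:R * b u) + b v).
  congr (_ + _); apply: eq_bigr => u uM; have [s2 _ ->] := sGH u uM.
  set s := (sG u).1.
  transitivity ((v == m0)%:R * (s * b u) - s ^+ 2 * ((v == u)%:R * b u)); first by ring.
  by rewrite s2 mul1r.
rewrite sumrB -mulr_sumr sb0 mulr0 sub0r (bigD1 v) //= eqxx mul1r big1 ?addr0 ?addNr //.
by move=> u /andP[_ uv]; rewrite eq_sym (negbTE uv) mul0r.
Qed.

End EdgeWeights.

Section Gluing.
Variables (V : finType) (e : rel V) (M : {set V}).
Hypothesis e_sym : symmetric e.

Definition unmarked_sum (f : V -> algC) v := \sum_(w | e v w && (w \notin M)) f w.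

Lemma unmarked_sum_comb a b f g v :
  unmarked_sum (fun w => a * f w + b * g w) v =
  a * unmarked_sum f v + b * unmarked_sum g v.
Proof. by rewrite /unmarked_sum big_split !mulr_sumr. Qed.

Definition unmarked_flux (s f : V -> algC) := \sum_(u in M) s u * unmarked_sum f u.

Lemma unmarked_flux_comb s a b f g :
  unmarked_flux s (fun w => a * f w + b * g w) =
  a * unmarked_flux s f + b * unmarked_flux s g.
Proof.
rewrite /unmarked_flux !mulr_sumr -big_split /=.
by apply: eq_bigr => u _; rewrite unmarked_sum_comb; ring.
Qed.

Definition glue (alpha : V -> algC) (G : V -> V -> algC) u w :=
  if u \in M then (if w \in M then G u w else alpha w) else alpha u.

Lemma walk_glue_fixed alpha G :
  (forall v w, G v w = G w v) ->
  (forall u w, u \notin M -> w \notin M -> e u w -> alpha u = alpha w) ->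
  {in M, forall v, wdeg e M G v + unmarked_sum alpha v = 0} ->
  walk M (arcfun e (glue alpha G)) = arcfun e (glue alpha G).
Proof.
move=> Gsym alpha_const Gbal.
apply: walk_arcfun_fixed => // [u v euv | v u w vU _ _ | v vM]; rewrite /glue.
- have [uM | uU] := boolP (u \in M); have [vM | vU] := boolP (v \in M) => //.
  exact: alpha_const.
- by rewrite (negbTE vU).
rewrite -[RHS](Gbal v vM) (bigID (fun w => w \in M)) /=.
by congr (_ + _); apply: eq_bigr => w /andP[_]; rewrite vM; case: (w \in M).
Qed.

Lemma glue_neq0 alpha G x w :
  x \notin M -> e x w -> alpha x != 0 -> arcfun e (glue alpha G) != 0.
Proof.
move=> xU exw; apply: contraNneq => /arcfun_eq0/(_ x w exw).
by rewrite /glue (negbTE xU) => ->.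
Qed.

End Gluing.

Theorem theorem3 (V : finType) (e : rel V)
  (e_sym : symmetric e) (e_irr : irreflexive e)
  (G_conn : forall x y : V, connect e x y)
  (M : {set V})
  (M_conn : induced_connected e M)
  (VM_disconn : ~ induced_connected e (~: M)) :
  has_stationary_state e M.
Proof.
have [x [y [xU yU nxy]]] := not_induced_connected VM_disconn.
rewrite !inE in xU yU.
have [M0 | [m0 m0M]] := set_0Vmem M.
  by case: VM_disconn; rewrite M0 setC0; exact: induced_connected_setT.
have [s sH] := wdeg_onto_hyperplane e_sym m0M M_conn.
pose chi z w : algC := (connect (induced e (~: M)) z w)%:R.
have [a [b [ab0 abH]]] :=
  exists_nontrivial_comb0 (unmarked_flux e M s (chi x)) (unmarked_flux e M s (chi y)).
pose alpha w := a * chi x w + b * chi y w.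
have [|G Gsym GH] := sH (unmarked_sum e M alpha).
  by rewrite -[RHS]abH -unmarked_flux_comb.
have [alpha_x alpha_y] : alpha x = a /\ alpha y = b.
  rewrite /alpha /chi !connect0 (negbTE nxy).
  rewrite (sym_connect_sym (induced_sym e_sym (~: M)) y x) (negbTE nxy) /=.
  by rewrite mulr1n mulr0n !mulr1 !mulr0 addr0 add0r.
have neighbour z : z \notin M -> exists w, e z w.
  by move=> zU; apply: (exists_neighbour (G_conn z m0)); apply: contraNneq zU => ->.
exists (arcfun e (glue M alpha G)); split.
  case/orP: ab0 => [a0 | b0].
    by have [w exw] := neighbour x xU; apply: (glue_neq0 _ xU exw); rewrite alpha_x.
  by have [w eyw] := neighbour y yU; apply: (glue_neq0 _ yU eyw); rewrite alpha_y.
apply: walk_glue_fixed => // u w uU wU euw.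
by rewrite /alpha /chi !(connect_induced_edge e_sym _ euw) ?inE.
Qed.
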